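(* For all $f\in\mathbb{F}_2[x]\setminus\{0\}$ it holds that $\tau(f)\le 2\deg(f)^{1.5}+1$.
   Context: Define $T:\mathbb{F}_2[x]\to\mathbb{F}_2[x]$ by $T(f)=\frac{f}{x+1}$ if $f(1)=0$ and $T(f)=\frac{xf+1}{x+1}$ if $f(1)=1$. For nonzero $f$, $\tau(f)$ is the least $k\in\mathbb{N}$ with $T^k(f)=1$. *)

From mathcomp Require Import all_boot all_algebra.
From Stdlib Require Import Reals.
Set Implicit Arguments. Unset Strict Implicit. Unset Printing Implicit Defensive.
Import GRing.Theory.
Local Open Scope ring_scope.

Notation F2poly := {poly 'F_2}.

(* T(f) = f/(x+1) if f(1)=0, and (x f + 1)/(x+1) if f(1)=1.
   In both cases the division is exact. *)
Definition T (f : F2poly) : F2poly :=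
  if f.[1] == 0 then f %/ ('X + 1)
  else ('X * f + 1) %/ ('X + 1).

Definition deg (f : F2poly) : nat := (size f).-1.

Definition is_tau (f : F2poly) (k : nat) : Prop :=
  iter k T f = 1 /\ (forall j : nat, is_true (leq j.+1 k) -> iter j T f <> 1).

(* Conjugating T by the translation f(x) |-> f(x + 1) turns it into Ttransl,
   which divides h by x when h(0) = 0 and otherwise maps h to h + h/x, where
   h/x drops the constant term.  The linear map L h = h + h/x satisfies
   L^(2^s) h = h + h/x^(2^s) in characteristic 2, so it has period 2^s on
   polynomials of degree < 2^s; moreover, if L h reaches 1 in n steps then h
   reaches 1 in n + 1 steps.  Hence a polynomial of degree i <= 2^s <= K(K+1)
   reaches 1 within (K+1) i steps: a step of Ttransl from h with h(0) = 1 is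
   a run of r applications of L followed by a division by x; if r <= K we
   recurse on the degree, and if r > K then h/x has r - 1 leading zeros and
   we go around the period of L instead.  Choosing 2^s the least power of two
   >= d = deg f and K + 1 = floor(sqrt(4d)) bounds the number of steps by
   (K+1) d <= 2 d^(3/2). *)

From mathcomp Require Import all_boot all_algebra zify.
From Stdlib Require PeanoNat.

Set Implicit Arguments. Unset Strict Implicit. Unset Printing Implicit Defensive.
Import GRing.Theory.
Local Open Scope ring_scope.

Lemma drop_poly_drop (R : nzSemiRingType) m n (p : {poly R}) :
  drop_poly m (drop_poly n p) = drop_poly (m + n) p.
Proof. by apply/polyP => i; rewrite !coef_drop_poly addnA. Qed.

Section DivX.

Context {A : nzRingType}.
Implicit Types p q : {poly A}.

Definition divX p := drop_poly 1 p.
Definition addDivX p := p + divX p.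

Lemma coef_divX p i : (divX p)`_i = p`_i.+1.
Proof. by rewrite coef_drop_poly addn1. Qed.

Lemma size_divX p : size (divX p) = (size p).-1.
Proof. by rewrite size_drop_poly subn1. Qed.

Lemma coef_addDivX p i : (addDivX p)`_i = p`_i + p`_i.+1.
Proof. by rewrite coefD coef_divX. Qed.

Lemma divXD p q : divX (p + q) = divX p + divX q.
Proof. exact: drop_polyD. Qed.

Lemma divX1 : divX 1 = 0 :> {poly A}.
Proof. by rewrite /divX drop_poly_eq0 ?size_poly1. Qed.

Lemma divX_mulX p : divX (p * 'X) = p.
Proof. by rewrite /divX -(expr1 'X) drop_polyMXn_id. Qed.

Lemma divX_addDivX p : divX (addDivX p) = addDivX (divX p).
Proof. exact: drop_polyD. Qed.

Lemma divX_iter_addDivX k p : divX (iter k addDivX p) = iter k addDivX (divX p).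
Proof. by elim: k => //= k IHk; rewrite divX_addDivX IHk. Qed.

Lemma iter_addDivXD k p q :
  iter k addDivX (p + q) = iter k addDivX p + iter k addDivX q.
Proof.
by elim: k => //= k ->; rewrite /addDivX /divX drop_polyD addrACA.
Qed.

Lemma size_addDivX p : size (addDivX p) = size p.
Proof.
have [->|p0] := eqVneq p 0; first by rewrite /addDivX /divX drop_poly0r addr0.
by rewrite size_polyDl // size_divX prednK ?size_poly_gt0.
Qed.

Lemma size_iter_addDivX k p : size (iter k addDivX p) = size p.
Proof. by elim: k => //= k IHk; rewrite size_addDivX. Qed.

Hypothesis pcharA2 : 2 \in [pchar A].

Lemma iter_addDivX_pow2 (s : nat) p :
  iter (2 ^ s)%N addDivX p = p + drop_poly (2 ^ s)%N p.
Proof.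
have pp0 q : q + q = 0 by apply: addrr_pchar2; rewrite pchar_poly.
elim: s p => [|s IHs] p; first by [].
rewrite expnS mul2n -addnn iterD (IHs p) iter_addDivXD !IHs drop_poly_drop.
by rewrite -addrA (addrA (drop_poly _ p)) pp0 add0r.
Qed.

Lemma iter_addDivX_period (s : nat) p :
  (size p <= 2 ^ s)%N -> iter (2 ^ s)%N addDivX p = p.
Proof. by move=> ps; rewrite iter_addDivX_pow2 drop_poly_eq0 ?addr0. Qed.

End DivX.

Lemma pchar_F2 : 2 \in [pchar 'F_2].
Proof. exact: pchar_Fp. Qed.

Lemma F2_neq0 (a : 'F_2) : a != 0 -> a = 1.
Proof. by case: a => [[|[|]]] // Ha _; apply: val_inj. Qed.

Lemma size_eq1_F2 (p : F2poly) : size p = 1%N -> p = 1.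
Proof.
move=> p1; rewrite [p]size1_polyC ?p1 // (@F2_neq0 p`_0) //.
by have := lead_coef_eq0 p; rewrite lead_coefE p1 -size_poly_eq0 p1 => ->.
Qed.

Lemma size_gt1_neq1 (p : F2poly) : (1 < size p)%N -> p != 1.
Proof. by apply: contraTneq => ->; rewrite size_poly1. Qed.

Implicit Types (g h u : F2poly).

Definition Ttransl h := if h`_0 == 0 then divX h else addDivX h.

Definition reaches h n := iter n Ttransl h = 1.

Lemma Ttransl1 : Ttransl 1 = 1.
Proof. by rewrite /Ttransl coef1 /= /addDivX /divX drop_poly_eq0 ?size_poly1 ?addr0. Qed.

Lemma reaches1 n : reaches 1 n.
Proof. by elim: n => //= n; rewrite /reaches /= => ->; exact: Ttransl1. Qed.

Lemma reaches_le h n n' : reaches h n -> (n <= n')%N -> reaches h n'.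
Proof.
by move=> hn /subnK <-; rewrite /reaches iterD hn; apply: reaches1.
Qed.

Lemma reaches_iter h m n : reaches (iter m Ttransl h) n -> reaches h (n + m).
Proof. by rewrite /reaches iterD. Qed.

Lemma reaches0 n : ~ reaches 0 n.
Proof.
have T0 : iter n Ttransl 0 = 0.
  by elim: n => //= n ->; rewrite /Ttransl coef0 eqxx /divX drop_poly0r.
by rewrite /reaches T0 => /eqP; rewrite eq_sym oner_eq0.
Qed.

Lemma first_nonzero_coef u : (1 < size u)%N ->
  exists r, [/\ (0 < r < size u)%N, u`_r = 1 & forall t, (0 < t < r)%N -> u`_t = 0].
Proof.
move=> u_gt1.
have : exists r, (0 < r)%N && (u`_r != 0).
  by exists (size u).-1; rewrite -lead_coefE lead_coef_eq0 -size_poly_eq0; lia.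
case/ex_minnP=> r /andP[r_gt0 /F2_neq0 ur] r_min; exists r; split => //.
- rewrite r_gt0 ltnNge; apply/negP => /(nth_default 0).
  by rewrite ur => /eqP; rewrite oner_eq0.
- move=> t /andP[t_gt0 t_lt_r]; apply/eqP; apply: contraTT t_lt_r => ut.
  by rewrite -leqNgt r_min ?t_gt0.
Qed.

Lemma coef0_iter_addDivX r u : (0 < r)%N -> u`_0 = 1 -> u`_r = 1 ->
    (forall t, (0 < t < r)%N -> u`_t = 0) ->
  (forall j, (j < r)%N -> (iter j addDivX u)`_0 = 1) /\ (iter r addDivX u)`_0 = 0.
Proof.
elim: r u => // r IHr u _ u0 ur u_gap.
have [r0|r_gt0] := posnP r.
  subst r; split=> [j|]; first by rewrite ltnS leqn0 => /eqP ->.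
  by rewrite coef_addDivX u0 ur; apply/eqP.
have v0 : (addDivX u)`_0 = 1 by rewrite coef_addDivX u0 u_gap ?addr0.
have vr : (addDivX u)`_r = 1 by rewrite coef_addDivX ur u_gap ?add0r // r_gt0 ltnSn.
have v_gap t : (0 < t < r)%N -> (addDivX u)`_t = 0.
  by move=> t_bd; rewrite coef_addDivX !u_gap ?addr0 //; lia.
have [v_run v_end] := IHr _ r_gt0 v0 vr v_gap.
by split=> [[|j] j_lt|] //; rewrite iterSr; [exact: v_run | exact: v_end].
Qed.

Lemma iter_Ttransl_run r u :
    (forall j, (j < r)%N -> (iter j addDivX u)`_0 = 1) -> (iter r addDivX u)`_0 = 0 ->
  (forall j, (j <= r)%N -> iter j Ttransl u = iter j addDivX u)
  /\ iter r.+1 Ttransl u = iter r addDivX (divX u).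
Proof.
move=> run1 end0.
have run j : (j <= r)%N -> iter j Ttransl u = iter j addDivX u.
  elim: j => // j IHj j_lt_r.
  by rewrite iterS IHj ?(ltnW j_lt_r) // /Ttransl run1 // oner_eq0.
by split=> //; rewrite iterS run // /Ttransl end0 eqxx divX_iter_addDivX.
Qed.

Lemma exists_Ttransl_run u : (1 < size u)%N -> exists r,
  (forall j, (j <= r)%N -> iter j Ttransl u = iter j addDivX u)
  /\ iter r.+1 Ttransl u = iter r addDivX (divX u).
Proof.
move=> u_gt1; have [u0|/F2_neq0 u1] := eqVneq u`_0 0.
  exists 0%N; split=> [j|]; first by rewrite leqn0 => /eqP ->.
  by rewrite /= /Ttransl u0 eqxx.
have [r [/andP[r_gt0 _] ur u_gap]] := first_nonzero_coef u_gt1.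
have [run1 end0] := coef0_iter_addDivX r_gt0 u1 ur u_gap.
by exists r; apply: iter_Ttransl_run.
Qed.

Lemma iter_Ttransl_gap m g : (forall t, (t < m)%N -> g`_t = 0) ->
  iter m Ttransl g = drop_poly m g.
Proof.
elim: m => [|m IHm] g0; first by rewrite drop_poly0l.
rewrite iterS IHm => [|t t_lt]; last exact/g0/leqW.
by rewrite /Ttransl coef_drop_poly add0n g0 // eqxx /divX drop_poly_drop.
Qed.

Lemma reaches_iter_addDivX_of_step m :
    (forall h n, (size h < m)%N -> reaches (addDivX h) n -> reaches h n.+1) ->
  forall k h n, (size h < m)%N -> reaches (iter k addDivX h) n -> reaches h (n + k).
Proof.
move=> step; elim=> [|k IHk] h n h_lt; first by rewrite addn0.
rewrite iterSr addnS => reach_k.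
have h1_lt : (size (addDivX h) < m)%N by rewrite size_addDivX.
exact: step _ _ h_lt (IHk _ _ h1_lt reach_k).
Qed.

Lemma reaches_addDivX h n : reaches (addDivX h) n -> reaches h n.+1.
Proof.
have [m] := ubnP (size h); elim: m h n => // m IHm h n; rewrite ltnS => h_le.
have [->|h_neq0] := eqVneq h 0.
  by rewrite /addDivX /divX drop_poly0r addr0 => /reaches0.
have [h0|/F2_neq0 h1] := eqVneq h`_0 0; last first.
  by rewrite /reaches iterSr /Ttransl h1 oner_eq0.
have h_gt1 : (1 < size h)%N.
  rewrite ltn_neqAle size_poly_gt0 h_neq0 andbT eq_sym.
  by apply/eqP => /size_eq1_F2 h1; move/eqP: h0; rewrite h1 coef1 oner_eq0.
have h1_gt1 : (1 < size (addDivX h))%N by rewrite size_addDivX.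
have [r [run step]] := exists_Ttransl_run h1_gt1; move=> h_reach.
have r_lt_n : (r < n)%N.
  rewrite ltnNge; apply/negP => n_le_r; move: h_reach; rewrite /reaches run //.
  by apply/eqP/size_gt1_neq1; rewrite size_iter_addDivX size_addDivX.
have tail_reach : reaches (iter r.+1 addDivX (divX h)) (n - r.+1).
  move: h_reach; rewrite /reaches -{1}(subnK r_lt_n) iterD step.
  by rewrite divX_addDivX -iterSr.
have := reaches_iter_addDivX_of_step IHm _ tail_reach.
rewrite subnK // /reaches iterSr /Ttransl h0 eqxx; apply.
by rewrite size_divX (leq_trans _ h_le) // ltn_predL (ltnW h_gt1).
Qed.

Lemma reaches_iter_addDivX k h n : reaches (iter k addDivX h) n -> reaches h (n + k).
Proof.
apply: reaches_iter_addDivX_of_step (ltnSn (size h)) => h' n' _.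
exact: reaches_addDivX.
Qed.

Section LinearBound.

Variables P K : nat.
Hypothesis P_le : (P <= K * K.+1)%N.
Hypothesis addDivX_period : forall g, (size g <= P)%N -> iter P addDivX g = g.

Lemma reaches_iter_addDivX_period r m g : (size g <= P)%N -> (r <= P)%N ->
  reaches g m -> reaches (iter r addDivX g) (m + (P - r)).
Proof.
move=> g_le r_le g_reach; apply: reaches_iter_addDivX.
by rewrite -iterD subnK // addDivX_period.
Qed.

Lemma reaches_linear i h : size h = i.+1 -> (i <= P)%N -> reaches h (K.+1 * i).
Proof.
elim/ltn_ind: i h => -[_ h h_size _|i IHi h h_size i_le].
  by rewrite (size_eq1_F2 h_size); apply: reaches1.
set g := divX h.
have g_size : size g = i.+1 by rewrite size_divX h_size.
have [h0|/F2_neq0 h1] := eqVneq h`_0 0.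
  have g_reach : reaches (iter 1 Ttransl h) (K.+1 * i).
    by rewrite /= /Ttransl h0 eqxx; apply: IHi g_size _ => //; apply: ltnW.
  by apply: reaches_le (reaches_iter g_reach) _; rewrite mulnS; lia.
have h_gt1 : (1 < size h)%N by rewrite h_size.
have [r [/andP[r_gt0 r_lt] hr h_gap]] := first_nonzero_coef h_gt1.
have [run1 end0] := coef0_iter_addDivX r_gt0 h1 hr h_gap.
have [_ h_step] := iter_Ttransl_run run1 end0.
have [r_le_K|K_lt_r] := leqP r K.
  have g_reach : reaches (iter r.+1 Ttransl h) (K.+1 * i).
    by rewrite h_step; apply: IHi => //; rewrite ?size_iter_addDivX // ltnW.
  by apply: reaches_le (reaches_iter g_reach) _; rewrite mulnS; lia.
set a := r.-1; have r_eq : r = a.+1 by rewrite prednK.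
have g_gap t : (t < a)%N -> g`_t = 0 by move=> t_lt; rewrite coef_divX h_gap //; lia.
have g_drop_reach : reaches (drop_poly a g) (K.+1 * (i - a)).
  by apply: IHi; rewrite ?size_drop_poly ?g_size; lia.
have g_reach : reaches g (K.+1 * (i - a) + a).
  by apply: reaches_iter; rewrite iter_Ttransl_gap.
have gr_reach : reaches (iter r addDivX g) (K.+1 * (i - a) + a + (P - r)).
  by apply: reaches_iter_addDivX_period; rewrite ?g_size //; lia.
have h_reach : reaches h (K.+1 * (i - a) + a + (P - r) + r.+1).
  by apply: reaches_iter; rewrite h_step.
apply: reaches_le h_reach _.
have : (K * K.+1 <= K * r)%N by rewrite leq_mul2l K_lt_r orbT.
have : (K.+1 * i.+1 = K.+1 * (i - a) + (K * r + r))%N.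
  by rewrite -mulSnr -mulnDr r_eq; congr (_ * _)%N; lia.
lia.
Qed.

End LinearBound.

Lemma exists_pow2_sqrt_bound d : (0 < d)%N -> exists s K,
  [/\ (2 ^ s <= K * K.+1)%N, (d <= 2 ^ s)%N & (K.+1 * K.+1 <= 4 * d)%N].
Proof.
move=> d_gt0; have [d_lt4|d_ge4] := ltnP d 4.
  case: d d_gt0 d_lt4 => [|[|[|[|]]]] // _ _.
  - by exists 0%N, 1%N.
  - by exists 1%N, 1%N.
  - by exists 2%N, 2%N.
set s := up_log 2 d; set q := Nat.sqrt (4 * d).
have [q_lo q_hi] := PeanoNat.Nat.sqrt_spec (4 * d) (PeanoNat.Nat.le_0_l _).
have d_le : (d <= 2 ^ s)%N by apply: up_logP.
have pow_lt : (2 ^ s.-1 < d)%N by apply: up_log_gtn; lia.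
have pow_eq : (2 ^ s = 2 * 2 ^ s.-1)%N by rewrite -expnS prednK // up_log_gt0; lia.
have q_ge4 : (4 <= q)%N by rewrite leqNgt; apply/negP => q_lt4; nia.
by exists s, q.-1; split; nia.
Qed.

Lemma reaches_cubic h : h != 0 ->
  exists n, reaches h n /\ (n * n <= 4 * ((size h).-1 * (size h).-1 * (size h).-1))%N.
Proof.
move=> h_neq0; set d := (size h).-1.
have h_size : size h = d.+1 by rewrite /d prednK ?size_poly_gt0.
have [d0|d_gt0] := posnP d.
  have -> : h = 1 by apply: size_eq1_F2; rewrite h_size d0.
  by exists 0%N; split; first exact: reaches1.
have [s [K [pow2_le d_le sqrt_le]]] := exists_pow2_sqrt_bound d_gt0.
have period g : (size g <= 2 ^ s)%N -> iter (2 ^ s) addDivX g = g.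
  exact/iter_addDivX_period/pchar_F2.
exists (K.+1 * d)%N; split; first exact: (reaches_linear pow2_le period h_size d_le).
nia.
Qed.

Definition transl (f : F2poly) := f \Po ('X + 1).

Lemma comp_XaddC1_XaddC1 : ('X + 1) \Po ('X + 1) = 'X :> F2poly.
Proof.
rewrite comp_polyD comp_polyX -polyC1 comp_polyC -addrA -polyCD.
by rewrite addrr_pchar2 ?pchar_F2 // addr0.
Qed.

Lemma translK : involutive transl.
Proof. by move=> f; rewrite /transl -comp_polyA comp_XaddC1_XaddC1 comp_polyXr. Qed.

Lemma size_transl f : size (transl f) = size f.
Proof. by rewrite /transl size_comp_poly2 // -polyC1 size_XaddC. Qed.

Lemma coef0_transl f : (transl f)`_0 = f.[1].
Proof. by rewrite -horner_coef0 horner_comp !hornerE. Qed.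

Lemma transl_mulXaddC1 f : transl (f * ('X + 1)) = transl f * 'X.
Proof. by rewrite /transl comp_polyM comp_XaddC1_XaddC1. Qed.

Lemma translT f : transl (T f) = Ttransl (transl f).
Proof.
have XsubC1 : 'X - 1%:P = 'X + 1 :> F2poly.
  by rewrite oppr_pchar2 ?pchar_poly ?pchar_F2 // polyC1.
have XaddC1_neq0 : 'X + 1 != 0 :> F2poly by rewrite -size_poly_eq0 -polyC1 size_XaddC.
rewrite /T /Ttransl coef0_transl; have [f1_eq0|/F2_neq0 f1] := eqVneq f.[1] 0.
  have /factor_theorem[g ->] : root f 1 by apply/eqP.
  by rewrite XsubC1 mulpK // transl_mulXaddC1 divX_mulX.
have /factor_theorem[g g_eq] : root ('X * f + 1) 1.
  by rewrite /root !hornerE f1 ?mul1r addrr_pchar2 ?pchar_F2.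
rewrite g_eq XsubC1 mulpK // -[transl g]divX_mulX -transl_mulXaddC1 -XsubC1 -g_eq.
rewrite /transl comp_polyD comp_polyM comp_polyX -polyC1 comp_polyC polyC1.
by rewrite mulrDl mul1r mulrC !divXD divX_mulX divX1 addr0.
Qed.

Lemma iterT_eq1_of_reaches f n : reaches (transl f) n -> iter n T f = 1.
Proof.
have iter_transl m : transl (iter m T f) = iter m Ttransl (transl f).
  by elim: m => //= m <-; rewrite translT.
rewrite /reaches -iter_transl => transl_eq1.
by rewrite -[iter n T f]translK transl_eq1 /transl -polyC1 comp_polyC.
Qed.

Lemma exists_is_tau f n : iter n T f = 1 -> exists2 k, is_tau f k & (k <= n)%N.
Proof.
move=> fn_eq1; have : exists k, iter k T f == 1 by exists n; apply/eqP.
case/ex_minnP=> k /eqP fk_eq1 k_min; exists k; last exact/k_min/eqP.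
by split=> // j j_lt /eqP/k_min; rewrite leqNgt j_lt.
Qed.

Lemma iterT_eq1_bound f : f != 0 ->
  exists n, iter n T f = 1 /\ (n * n <= 4 * (deg f * deg f * deg f))%N.
Proof.
move=> f_neq0; have transl_f_neq0 : transl f != 0.
  by rewrite -size_poly_eq0 size_transl size_poly_eq0.
have [n [n_reach n_le]] := reaches_cubic transl_f_neq0.
by exists n; split; [exact: iterT_eq1_of_reaches | rewrite /deg -size_transl].
Qed.

Close Scope ring_scope.
From Stdlib Require Import Reals Lra.

Lemma INR_le_sqrt_cube n d : (n * n <= 4 * (d * d * d))%N ->
  (INR n <= 2 * (INR d * sqrt (INR d)))%R.
Proof.
move=> /leP /le_INR; rewrite !mult_INR => n2_le.
have d_ge0 := pos_INR d; have sqrt_ge0 := sqrt_pos (INR d).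
have sqrt_sq := sqrt_sqrt (INR d) d_ge0.
have four : INR 4 = 4%R by rewrite /=; lra.
apply Rsqr_incr_0_var; rewrite /Rsqr; nra.
Qed.

Theorem theorem3p5 (f : {poly 'F_2}) :
  f != GRing.zero ->
  exists k : nat, is_tau f k /\
    (INR k <= 2 * (INR (deg f) * sqrt (INR (deg f))) + 1)%R.
Proof.
move=> f_neq0; have [n [fn_eq1 n_le]] := iterT_eq1_bound f_neq0.
have [k k_tau k_le_n] := exists_is_tau fn_eq1.
exists k; split=> //.
have := INR_le_sqrt_cube n_le; have /leP/le_INR := k_le_n; lra.
Qed.
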